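(* Let $\mathcal G$ be a finite connected groupoid and $\alpha=(S_g,\alpha_g)_{g\in\mathcal G}$ a unital group-type partial action of $\mathcal G$ on a commutative ring $S=\bigoplus_{y\in\mathcal G_0}S_y$, with $S_g=S1_g$ and $1_g\neq0$ for all $g$. Suppose $S$ is an $\alpha$-partial Galois extension of $R=S^{\alpha_{\mathcal G}}$. Let $\mathcal H\in\mathrm{wSub}_\alpha(\mathcal G)$ and $T=S^{\alpha_{\mathcal H}}$. Then (i) $T$ is $R$-separable and $\alpha$-strong, and (ii) $\mathcal G_T=\mathcal H$.
   Context: A groupoid is a small category with all morphisms invertible; $\mathcal G_0$ is its object set (identified with identity morphisms), $s(g),t(g)$ source and target, $\mathcal G(x,y)=\{g:s(g)=x,t(g)=y\}$, $\mathcal G(x)=\mathcal G(x,x)$; $gh$ defined iff $s(g)=t(h)$; connected means all $\mathcal G(x,y)\ne\emptyset$; connected components are full subgroupoids on classes of $x\sim y\iff\mathcal G(x,y)\neq\emptyset$; wide means containing all objects. A partial action $\alpha=(S_g,\alpha_g)_{g\in\mathcal G}$ on a ring $S$: for each $g$, $S_{t(g)}$ is an ideal of $S$, $S_g$ an ideal of $S_{t(g)}$, $\alpha_g:S_{g^{-1}}\to S_g$ a ring isomorphism; $\alpha_x=\mathrm{id}_{S_x}$; for composable $(g,h)$, $\alpha_h^{-1}(S_{g^{-1}}\cap S_h)\subseteq S_{(gh)^{-1}}$ and $\alpha_g\alpha_h(a)=\alpha_{gh}(a)$ there. Unital: $S_g=S1_g$, $1_g$ central idempotent. A partial action of a connected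 groupoid $\mathcal K$ on $A=\bigoplus_{y\in\mathcal K_0}A_y$ is group-type if there are $x\in\mathcal K_0$ and $\tau_y\in\mathcal K(x,y)$ ($\tau_x=x$) with $A_{\tau_y^{-1}}=A_x$, $A_{\tau_y}=A_y$ for all $y$; for non-connected $\mathcal K$, if each restriction to a connected component is group-type. For a subgroupoid $\mathcal H$, $\alpha_{\mathcal H}=(S_h,\alpha_h)_{h\in\mathcal H}$ acts on $\bigoplus_{z\in\mathcal H_0}S_z$; $\mathrm{wSub}_\alpha(\mathcal G)$ is the set of wide subgroupoids $\mathcal H$ with $\alpha_{\mathcal H}$ group-type. $S^{\alpha_{\mathcal K}}=\{a\in S:\alpha_k(a1_{k^{-1}})=a1_k\ \forall k\in\mathcal K\}$. $S$ is an $\alpha$-partial Galois extension of $R=S^{\alpha_{\mathcal G}}$ if there exist $m\ge1$, $a_i,b_i\in S$ with $\sum_{i=1}^m a_i\alpha_g(b_i1_{g^{-1}})=\delta_{z,g}1_z$ for all $z\in\mathcal G_0$, $g\in\mathcal G$ (i.e. $1_g$ if $g\in\mathcal G_0$, $0$ otherwise). For a subring $T$, $\mathcal G_T=\{g\in\mathcal G:\alpha_g(t1_{g^{-1}})=t1_g\ \forall t\in T\}$ and $\mathcal G(y)_{B}$ is defined likewise inside $\mathcal G(y)$ for $B\subseteq S_y$. $T$ is $R$-separable if the unital extension $R\subseteq T$ is separable (the multiplication $T\otimes_RT\to T$ splits as $T$-bimodules). For $y\in\mathcal G_0$, $T_y=T1_y$ is $\alpha_{\mathcal G(y,z)}$-strong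 if for any $g,h\in\mathcal G(y,z)$ with $g^{-1}h\notin\mathcal G(y)_{T_y}$ and any non-zero idempotent $e\in S_g\cup S_h$ there is $t_y\in T_y$ with $\alpha_g(t_y1_{g^{-1}})e\ne\alpha_h(t_y1_{h^{-1}})e$; $T$ is $\alpha$-strong if $T_y$ is $\alpha_{\mathcal G(y,z)}$-strong for all $y,z$. *)

From HB Require Import structures.
From mathcomp Require Import all_boot all_order all_algebra.
Set Implicit Arguments. Unset Strict Implicit. Unset Printing Implicit Defensive.
Import GRing.Theory.
Local Open Scope ring_scope.

(* A finite groupoid: objects are identified with identity morphisms
   (the elements x with src x = x).  The composition gmul g h is only
   meaningful when src g = tgt h (it is a total function with arbitrary
   values elsewhere). *)
Record groupoid := Groupoid {
  gcar :> finType;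
  src : gcar -> gcar;
  tgt : gcar -> gcar;
  gmul : gcar -> gcar -> gcar;
  ginv : gcar -> gcar;
  src_src : forall g, src (src g) = src g;
  tgt_src : forall g, tgt (src g) = src g;
  src_tgt : forall g, src (tgt g) = tgt g;
  tgt_tgt : forall g, tgt (tgt g) = tgt g;
  src_mul : forall g h, src g = tgt h -> src (gmul g h) = src h;
  tgt_mul : forall g h, src g = tgt h -> tgt (gmul g h) = tgt g;
  mulA : forall g h k, src g = tgt h -> src h = tgt k ->
           gmul g (gmul h k) = gmul (gmul g h) k;
  mul_tgt : forall g, gmul (tgt g) g = g;
  mul_src : forall g, gmul g (src g) = g;
  src_inv : forall g, src (ginv g) = tgt g;
  tgt_inv : forall g, tgt (ginv g) = src g;
  mulV : forall g, gmul g (ginv g) = tgt g;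
  mulVg : forall g, gmul (ginv g) g = src g
}.

Section Defs.
Variable G : groupoid.

Definition obj (x : G) : bool := src x == x.

Definition gconnected : Prop :=
  forall x y : G, obj x -> obj y -> exists g : G, src g = x /\ tgt g = y.

Definition subgroupoid (H : {set G}) : Prop :=
  (forall g h, g \in H -> h \in H -> src g = tgt h -> gmul g h \in H) /\
  (forall g, g \in H -> ginv g \in H).
Definition wide (H : {set G}) : Prop := forall x, obj x -> x \in H.

Definition hconn (H : {set G}) (x y : G) : Prop :=
  exists2 h, h \in H & src h = x /\ tgt h = y.

Variable S : comNzRingType.
Variable one : G -> S.          (* g |-> 1_g, S_g = S 1_g *)
Variable alpha : G -> S -> S.   (* alpha g, meaningful on S_{g^-1} *)

Definition unital_partial_action : Prop :=
  (forall g, one g * one g = one g) /\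
  (* S_g is an ideal of S_{t(g)} *)
  (forall g, one g * one (tgt g) = one g) /\
  (* S = (+)_{y in G_0} S_y (internal direct sum of the ideals S 1_y) *)
  (\sum_(y : G | obj y) one y = 1) /\
  (forall x y, obj x -> obj y -> x != y -> one x * one y = 0) /\
  (* alpha_g : S_{g^-1} -> S_g is a ring isomorphism *)
  (forall g a b, alpha g (a * one (ginv g) + b * one (ginv g)) =
                 alpha g (a * one (ginv g)) + alpha g (b * one (ginv g))) /\
  (forall g a b, alpha g ((a * one (ginv g)) * (b * one (ginv g))) =
                 alpha g (a * one (ginv g)) * alpha g (b * one (ginv g))) /\
  (forall g a, alpha g (a * one (ginv g)) * one g = alpha g (a * one (ginv g))) /\
  (forall g a b, alpha g (a * one (ginv g)) = alpha g (b * one (ginv g)) ->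
                 a * one (ginv g) = b * one (ginv g)) /\
  (forall g b, exists a, alpha g (a * one (ginv g)) = b * one g) /\
  (forall x a, obj x -> alpha x (a * one x) = a * one x) /\
  (forall g h a, src g = tgt h ->
     alpha h (a * one (ginv h)) * one (ginv g) = alpha h (a * one (ginv h)) ->
     (a * one (ginv h)) * one (ginv (gmul g h)) = a * one (ginv h) /\
     alpha g (alpha h (a * one (ginv h))) = alpha (gmul g h) (a * one (ginv h))).

(* alpha restricted to H is group-type: on every connected component of H
   (represented by any of its objects z) there are an object x and
   tau_y in H(x,y) with tau_x = x, 1_{tau_y^-1} = 1_x and 1_{tau_y} = 1_y. *)
Definition group_type_on (H : {set G}) : Prop :=
  forall z, obj z -> exists x, [/\ obj x, hconn H z x &
    exists tau : G -> G, tau x = x /\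
      forall y, obj y -> hconn H x y ->
        [/\ tau y \in H, src (tau y) = x, tgt (tau y) = y,
            one (ginv (tau y)) = one x & one (tau y) = one y]].

Definition wSub (H : {set G}) : Prop :=
  [/\ subgroupoid H, wide H & group_type_on H].

Definition fixed_ring (K : {set G}) (a : S) : Prop :=
  forall k, k \in K -> alpha k (a * one (ginv k)) = a * one k.

Definition partial_galois : Prop :=
  exists m : nat, (0 < m)%N /\ exists a b : 'I_m -> S,
    forall g : G, \sum_(i < m) a i * alpha g (b i * one (ginv g)) =
                  if obj g then one g else 0.

Definition GT (T : S -> Prop) (g : G) : Prop :=
  forall t, T t -> alpha g (t * one (ginv g)) = t * one g.

Definition alpha_strong (T : S -> Prop) : Prop :=
  forall (y z : G) (g h : G), obj y -> obj z ->
    src g = y -> tgt g = z -> src h = y -> tgt h = z ->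
    (* g^-1 h notin G(y)_{T_y} *)
    ~ (forall t, T t -> alpha (gmul (ginv g) h) ((t * one y) * one (ginv (gmul (ginv g) h)))
                        = (t * one y) * one (gmul (ginv g) h)) ->
    forall e : S, e * e = e -> e != 0 -> (e * one g = e \/ e * one h = e) ->
      exists ty, (exists t, T t /\ ty = t * one y) /\
        alpha g (ty * one (ginv g)) * e != alpha h (ty * one (ginv h)) * e.

End Defs.

(* Tensor products over a subring R of subrings T of a commutative ring S,
   presented by their universal property: two finite formal sums
   sum u_i (x) v_i are equal in T (x)_R T iff every R-balanced biadditive
   map T x T -> M into an abelian group M takes the same value on them. *)
Section Tensor.
Variable S : comNzRingType.
Variables R T : S -> Prop.

Definition balanced (M : zmodType) (f : S -> S -> M) : Prop :=
  (forall a a' b, T a -> T a' -> T b -> f (a + a') b = f a b + f a' b) /\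
  (forall a b b', T a -> T b -> T b' -> f a (b + b') = f a b + f a b') /\
  (forall a b r, T a -> T b -> R r -> f (a * r) b = f a (r * b)).

Definition tensor_eq (u v : seq (S * S)) : Prop :=
  forall (M : zmodType) (f : S -> S -> M), balanced f ->
    \sum_(p <- u) f p.1 p.2 = \sum_(p <- v) f p.1 p.2.

(* T is R-separable (R subset T, S commutative): the multiplication
   T (x)_R T -> T splits as T-bimodules, i.e. there is a separability
   element e = sum x_i (x) y_i with mu(e) = 1 and t e = e t for all t in T. *)
Definition separable_over : Prop :=
  exists u : seq (S * S),
    (forall p, p \in u -> T p.1 /\ T p.2) /\
    \sum_(p <- u) p.1 * p.2 = 1 /\
    forall t, T t ->
      tensor_eq [seq (t * p.1, p.2) | p <- u] [seq (p.1, p.2 * t) | p <- u].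
End Tensor.

(* Write [act g s] for [alpha_g (s 1_(g^-1))].  The Galois coordinates give the
   orthogonality relations [\sum_i act g (a i) * act k (b i) = (g == k) 1_g], hence
   a Dedekind-type independence of the maps [act g], and the expansion
   [s = \sum_i a_i tr_H (b_i s)] through the trace [tr_H = \sum_(h in H) act h],
   whose values lie in [T].  Independence yields [G_T <= H] (as [1_g != 0]) and the
   strongness of [T].  The trace hits [1]: the matrix [X = (tr_H (b_j a_i))_ij]
   fixes the column [(a_i)_i], so [det (1 - X) = 0], whereas [det (1 - X) = 1]
   modulo the ideal [tr_H S] of [T].  If [tr_H c = 1], then
   [\sum_i tr_H (a_i) (x) tr_H (b_i c)] is a separability element of [T] over [R]. *)

From Stdlib Require Import Classical.
From Pilot Require Import Defs.
From mathcomp Require Import all_boot all_order all_algebra perm ring.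
Set Implicit Arguments. Unset Strict Implicit. Unset Printing Implicit Defensive.
Import GRing.Theory.
Local Open Scope ring_scope.

(* Unqualified, [mulVg] and its siblings would denote the [fingroup] lemmas. *)
Local Notation gmulA := Defs.mulA.
Local Notation gmulV := Defs.mulV.
Local Notation gmulVg := Defs.mulVg.
Local Notation gmul_src := Defs.mul_src.
Local Notation gmul_tgt := Defs.mul_tgt.

Section Groupoid.
Variable G : groupoid.
Implicit Types g h k x : G.

Lemma tgt_obj x : obj x -> tgt x = x.
Proof. by move/eqP=> <-; rewrite tgt_src. Qed.

Lemma obj_src g : obj (src g).
Proof. by rewrite /obj src_src. Qed.

Lemma obj_tgt g : obj (tgt g).
Proof. by rewrite /obj src_tgt. Qed.

Lemma eq_ginv g h : src g = tgt h -> gmul g h = src h -> g = ginv h.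
Proof.
move=> sgh gh.
rewrite -[LHS]gmul_src sgh -gmulV gmulA ?src_inv ?tgt_inv // gh.
by rewrite -tgt_inv gmul_tgt.
Qed.

Lemma ginvK g : ginv (ginv g) = g.
Proof. by apply/esym/eq_ginv; rewrite ?src_inv ?gmulV ?tgt_inv. Qed.

Lemma ginv_obj x : obj x -> ginv x = x.
Proof.
move=> ox; have sx : src x = x by apply/eqP.
apply/esym/eq_ginv; first by rewrite sx tgt_obj.
by rewrite sx -{2}sx gmul_src.
Qed.

Lemma gmulKg k h : src k = tgt h -> gmul (ginv k) (gmul k h) = h.
Proof. by move=> skh; rewrite gmulA ?src_inv // gmulVg skh gmul_tgt. Qed.

Lemma gmulKVg k g : tgt k = tgt g -> gmul k (gmul (ginv k) g) = g.
Proof. by move=> tkg; rewrite gmulA ?tgt_inv ?src_inv // gmulV tkg gmul_tgt. Qed.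

Lemma subgroupoidT : subgroupoid [set: G].
Proof. by split=> *; rewrite inE. Qed.

Lemma gmul_neq_lcoset (H : {set G}) g h h' :
  gmul (ginv g) h \notin H -> h' \in H -> src g = tgt h' -> gmul g h' != h.
Proof. by move=> ghH h'H sgh'; apply: contraNneq ghH => <-; rewrite gmulKg. Qed.

Lemma gmul_neq_lcoset_sym (H : {set G}) g h h' : subgroupoid H ->
  src (ginv g) = tgt h -> gmul (ginv g) h \notin H -> h' \in H ->
  src h = tgt h' -> gmul h h' != g.
Proof.
case=> _ H_inv sgh ghH h'H shh'; apply: contraNneq ghH => hh'g.
suff -> : gmul (ginv g) h = ginv h' by apply: H_inv.
apply: eq_ginv; first by rewrite src_mul.
by rewrite -gmulA // hh'g gmulVg -hh'g src_mul.
Qed.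

End Groupoid.

Section Balanced.
Variables (S : comNzRingType) (R T : S -> Prop) (M : zmodType) (f : S -> S -> M).
Hypotheses (T0 : T 0) (TD : forall s t, T s -> T t -> T (s + t)).
Hypothesis f_bal : balanced R T f.

Lemma balanced_suml (I : Type) (r : seq I) (F : I -> S) t :
  (forall i, T (F i)) -> T t -> f (\sum_(i <- r) F i) t = \sum_(i <- r) f (F i) t.
Proof.
case: f_bal => fD _ TF Tt; elim: r => [|i r IH]; rewrite ?big_nil ?big_cons.
  by apply: (addrI (f 0 t)); rewrite -fD // !addr0.
by rewrite fD ?IH //; apply: big_ind.
Qed.

Lemma balanced_sumr (I : Type) (r : seq I) (F : I -> S) s :
  (forall i, T (F i)) -> T s -> f s (\sum_(i <- r) F i) = \sum_(i <- r) f s (F i).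
Proof.
case: f_bal => _ [fD _] TF Ts; elim: r => [|i r IH]; rewrite ?big_nil ?big_cons.
  by apply: (addrI (f s 0)); rewrite -fD // !addr0.
by rewrite fD ?IH //; apply: big_ind.
Qed.

End Balanced.

Section PartialAction.
Variables (G : groupoid) (S : comNzRingType) (one : G -> S) (alpha : G -> S -> S).
Hypothesis upa : unital_partial_action one alpha.
Implicit Types (g h k x : G) (K : {set G}).

Definition act g s := alpha g (s * one (ginv g)).

Lemma one_idem g : one g * one g = one g.
Proof. by case: upa => idem _; apply: idem. Qed.

Lemma one_mul_tgt g : one g * one (tgt g) = one g.
Proof. by case: upa => _ [tgt_one _]; apply: tgt_one. Qed.

Lemma sum_one_obj : \sum_(y : G | obj y) one y = 1.
Proof. by case: upa => _ [_ [sum1 _]]. Qed.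

Lemma one_obj_orth x y : obj x -> obj y -> x != y -> one x * one y = 0.
Proof. by case: upa => _ [_ [_ [orth _]]]; apply: orth. Qed.

Lemma actD g s t : act g (s + t) = act g s + act g t.
Proof. by case: upa => _ [_ [_ [_ [actD _]]]]; rewrite /act mulrDl actD. Qed.

Lemma actM g s t : act g (s * t) = act g s * act g t.
Proof.
case: upa => _ [_ [_ [_ [_ [actM _]]]]].
by rewrite /act -actM mulrACA one_idem.
Qed.

Lemma act_mul_one g s : act g s * one g = act g s.
Proof. by case: upa => _ [_ [_ [_ [_ [_ [actS _]]]]]]; apply: actS. Qed.

Lemma act_onto g s : exists r, act g r = s * one g.
Proof. by case: upa => _ [_ [_ [_ [_ [_ [_ [_ [onto _]]]]]]]]; apply: onto. Qed.

Lemma act_obj x s : obj x -> act x s = s * one x.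
Proof.
case: upa => _ [_ [_ [_ [_ [_ [_ [_ [_ [actx _]]]]]]]]] ox.
by rewrite /act ginv_obj // actx.
Qed.

Lemma act_comp_in k h s : src k = tgt h -> act h s * one (ginv k) = act h s ->
  act k (act h s) = act (gmul k h) (s * one (ginv h)).
Proof.
case: upa => _ [_ [_ [_ [_ [_ [_ [_ [_ [_ comp]]]]]]]]] skh hs.
have [dom_comp comp_eq] := comp k h s skh hs.
by rewrite /act dom_comp -comp_eq; congr (alpha k _); exact: hs.
Qed.

Lemma act_mul_one_inv g s : act g (s * one (ginv g)) = act g s.
Proof. by rewrite /act -mulrA one_idem. Qed.

Lemma act0 g : act g 0 = 0.
Proof. by apply: (addrI (act g 0)); rewrite -actD !addr0. Qed.

Lemma actN g s : act g (- s) = - act g s.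
Proof. by apply/eqP; rewrite -addr_eq0 -actD addNr act0. Qed.

Lemma act_sum g (I : Type) (r : seq I) (P : pred I) (F : I -> S) :
  act g (\sum_(i <- r | P i) F i) = \sum_(i <- r | P i) act g (F i).
Proof. exact: (big_morph (act g) (actD g) (act0 g)). Qed.

Lemma act1 g : act g 1 = one g.
Proof.
have [r actr] := act_onto g 1.
have : act g 1 * act g r = act g r by rewrite -actM mul1r.
by rewrite actr mul1r act_mul_one.
Qed.

Lemma one_inv_src g : one (ginv g) * one (src g) = one (ginv g).
Proof. by rewrite -tgt_inv one_mul_tgt. Qed.

Lemma act_one_src g : act g (one (src g)) = one g.
Proof.
by rewrite -act_mul_one_inv mulrC one_inv_src -[one _]mul1r act_mul_one_inv act1.
Qed.

Lemma act_invK h s : act (ginv h) (act h s) = s * one (ginv h).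
Proof.
rewrite act_comp_in ?src_inv ?ginvK ?act_mul_one // gmulVg act_obj ?obj_src //.
by rewrite -mulrA one_inv_src.
Qed.

(* The composition axiom only covers [act h s] lying in [S_(k^-1)]; in general a
   factor [act k (one h)] appears, computed in [act_one_comp]. *)
Lemma act_comp_defect k h s : src k = tgt h ->
  act k (act h s) = act (gmul k h) s * act k (one h).
Proof.
move=> skh; set w := act (ginv h) (one (ginv k)).
have comp s' : act k (act h s') = act (gmul k h) s' * act (gmul k h) w.
  rewrite -act_mul_one_inv; set u := act h s' * one (ginv k).
  have actu : act h (act (ginv h) u) = u.
    by rewrite -{1}(ginvK h) act_invK ginvK /u mulrAC act_mul_one.
  rewrite -actu act_comp_in // ?actu; last by rewrite /u -mulrA one_idem.
  rewrite act_mul_one /u actM act_invK -/w -mulrA [one (ginv h) * w]mulrC.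
  by rewrite /w act_mul_one -/w actM.
by rewrite comp; congr (_ * _); rewrite -(act1 h) comp act1 mulrC act_mul_one.
Qed.

Lemma act_one_comp k h : src k = tgt h -> act k (one h) = one (gmul k h) * one k.
Proof.
move=> skh.
have gen1 : act k (one h) * one (gmul k h) = act k (one h).
  by rewrite mulrC -{2}(act1 h) act_comp_defect // act1.
set v := act (ginv k) (one (gmul k h)).
have skinv : src (ginv k) = tgt (gmul k h) by rewrite src_inv tgt_mul.
have v_one : v = one h * v.
  by rewrite /v -{1}(act1 (gmul k h)) act_comp_defect // gmulKg // act1.
have actv : act k v = one (gmul k h) * one k.
  by rewrite /v -{1}(ginvK k) act_invK ginvK.
by rewrite -actv v_one actM actv mulrA mulrAC act_mul_one gen1.
Qed.

Lemma act_comp k h s : src k = tgt h ->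
  act k (act h s) = act (gmul k h) s * one k.
Proof.
move=> skh; rewrite act_comp_defect // act_one_comp //.
by rewrite mulrA act_mul_one.
Qed.

Lemma act_comp_ncomp k h s : src k != tgt h -> act k (act h s) = 0.
Proof.
move=> skh; rewrite -act_mul_one_inv -[act h s]act_mul_one.
rewrite -(one_mul_tgt h) -(one_inv_src k) [X in act k X](_ : _ =
  act h s * one h * one (ginv k) * (one (tgt h) * one (src k))); last by ring.
by rewrite one_obj_orth ?obj_tgt ?obj_src 1?eq_sym // mulr0 act0.
Qed.

Lemma act_mul_tgt_neq g k s t : tgt g != tgt k -> act g s * act k t = 0.
Proof.
move=> tgk; rewrite -[act g s]act_mul_one -[act k t]act_mul_one.
rewrite -(one_mul_tgt g) -(one_mul_tgt k) [LHS](_ : _ =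
  act g s * one g * (act k t * one k) * (one (tgt g) * one (tgt k))); last by ring.
by rewrite one_obj_orth ?obj_tgt // mulr0.
Qed.

Local Notation fixed K := (fixed_ring one alpha K).

Definition trace (K : {set G}) s := \sum_(h in K) act h s.

Lemma fixed_act (K : {set G}) t k : fixed K t -> k \in K -> act k t = t * one k.
Proof. by move=> Kt; apply: Kt. Qed.

Lemma fixed_sub (K K' : {set G}) t : K \subset K' -> fixed K' t -> fixed K t.
Proof. by move=> sKK' K't k /(subsetP sKK'); apply: K't. Qed.

Lemma fixed0 K : fixed K 0.
Proof. by move=> k _; rewrite -[LHS]/(act k 0) act0 mul0r. Qed.

Lemma fixed1 K : fixed K 1.
Proof. by move=> k _; rewrite -[LHS]/(act k 1) act1 mul1r. Qed.

Lemma fixedD K s t : fixed K s -> fixed K t -> fixed K (s + t).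
Proof.
move=> Ks Kt k kK; rewrite -[LHS]/(act k _) actD.
by rewrite (fixed_act Ks kK) (fixed_act Kt kK) mulrDl.
Qed.

Lemma fixedN K t : fixed K t -> fixed K (- t).
Proof. by move=> Kt k kK; rewrite -[LHS]/(act k _) actN (fixed_act Kt kK) mulNr. Qed.

Lemma fixedM K s t : fixed K s -> fixed K t -> fixed K (s * t).
Proof.
move=> Ks Kt k kK; rewrite -[LHS]/(act k _) actM (fixed_act Ks kK) (fixed_act Kt kK).
by rewrite mulrACA one_idem.
Qed.

Lemma fixedX K t n : fixed K t -> fixed K (t ^+ n).
Proof.
by move=> Kt; elim: n => [|n IH]; rewrite ?expr0 ?exprS; [apply: fixed1 | apply: fixedM].
Qed.

Lemma fixed_prod K (I : Type) (r : seq I) (P : pred I) (F : I -> S) :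
  (forall i, P i -> fixed K (F i)) -> fixed K (\prod_(i <- r | P i) F i).
Proof. by move=> KF; apply: big_ind => //; [apply: fixed1 | apply: fixedM]. Qed.

Lemma trace0 K : trace K 0 = 0.
Proof. by rewrite /trace big1 // => h _; apply: act0. Qed.

Lemma traceD K s t : trace K (s + t) = trace K s + trace K t.
Proof. by rewrite /trace -big_split; apply: eq_bigr => h _; apply: actD. Qed.

Lemma traceN K s : trace K (- s) = - trace K s.
Proof. by rewrite /trace -sumrN; apply: eq_bigr => h _; apply: actN. Qed.

Lemma trace_fixed_mull K t s : fixed K t -> trace K (t * s) = t * trace K s.
Proof.
move=> Kt; rewrite /trace mulr_sumr; apply: eq_bigr => h hK.
by rewrite actM (fixed_act Kt hK) -mulrA [one h * _]mulrC act_mul_one.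
Qed.

Lemma act_trace K k s :
  act k (trace K s) = \sum_(h in K | src k == tgt h) act (gmul k h) s * one k.
Proof.
rewrite act_sum big_mkcondr; apply: eq_bigr => h _.
by case: eqP => [skh | /eqP skh]; [rewrite act_comp | rewrite act_comp_ncomp].
Qed.

(* Left translation by [k] permutes the arrows of [K] ending at [tgt k]. *)
Lemma trace_fixed K s : subgroupoid K -> fixed K (trace K s).
Proof.
case=> K_mul K_inv k kK; rewrite -[LHS]/(act k _) act_trace /trace mulr_suml.
rewrite [RHS](bigID (fun h => tgt h == tgt k)) /= [X in _ + X]big1 ?addr0; last first.
  by move=> h /andP [_ tgth]; rewrite -(act1 k) act_mul_tgt_neq.
rewrite [RHS](reindex_onto (gmul k) (gmul (ginv k))) /=; last first.
  by move=> h /andP [_ /eqP tgth]; apply: gmulKVg.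
apply: eq_bigl => h; apply/idP/idP => [/andP [hK /eqP skh] | ].
  by rewrite K_mul // tgt_mul // eqxx gmulKg ?eqxx.
case/andP => /andP [khK /eqP tkh] /eqP kkh.
have sk : src (ginv k) = tgt (gmul k h) by rewrite src_inv tkh.
by rewrite -kkh K_mul ?K_inv // tgt_mul ?tgt_inv ?eqxx.
Qed.

Section GaloisCoordinates.
Variables (m : nat) (a b : 'I_m -> S).
Hypothesis galois_coords :
  forall g, \sum_(i < m) a i * act g (b i) = if obj g then one g else 0.

Lemma galois_orth g k :
  \sum_(i < m) act g (a i) * act k (b i) = if g == k then one g else 0.
Proof.
have [tgk | tgk] := eqVneq (tgt g) (tgt k); last first.
  rewrite big1 => [|i _]; last exact: act_mul_tgt_neq.
  by case: eqVneq => // gk; rewrite gk eqxx in tgk.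
set d := gmul (ginv g) k.
have sgd : src g = tgt d by rewrite tgt_mul ?src_inv // tgt_inv.
have gd : gmul g d = k by apply: gmulKVg.
transitivity (act g (\sum_(i < m) a i * act d (b i))).
  rewrite act_sum; apply: eq_bigr => i _.
  by rewrite actM act_comp // gd mulrA mulrAC act_mul_one.
rewrite galois_coords; case: (eqVneq g k) => [gk | gk].
  by rewrite /d -gk gmulVg obj_src act_one_src.
case: ifP => [od | _]; last exact: act0.
by move: gk; rewrite -gd -[d](tgt_obj od) -sgd gmul_src eqxx.
Qed.

(* Dedekind-type independence: multiply by [1_g = \sum_i act g (a i) * act g (b i)]
   and use [galois_orth]. *)
Lemma act_independent g c (P : pred G) (d : G -> S) (kap : G -> G) :
  (forall j, P j -> kap j != g) ->
  (forall s, c * act g s = \sum_(j | P j) d j * act (kap j) s) -> c * one g = 0.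
Proof.
move=> kap_neq dep; have := galois_orth g g; rewrite eqxx => <-.
rewrite mulr_sumr; under eq_bigr => i _ do rewrite mulrCA dep mulr_sumr.
rewrite exchange_big /= big1 // => j Pj.
transitivity (d j * \sum_(i < m) act g (a i) * act (kap j) (b i)).
  by rewrite mulr_sumr; apply: eq_bigr => i _; rewrite mulrCA.
by rewrite galois_orth eq_sym (negbTE (kap_neq j Pj)) mulr0.
Qed.

Lemma galois_expand K s : wide K -> s = \sum_(i < m) a i * trace K (b i * s).
Proof.
move=> wK; symmetry.
transitivity (\sum_(h in K) act h s * \sum_(i < m) a i * act h (b i)).
  rewrite /trace; under eq_bigr => i _ do rewrite mulr_sumr.
  rewrite exchange_big /=; apply: eq_bigr => h _.
  by rewrite mulr_sumr; apply: eq_bigr => i _; rewrite actM; ring.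
under eq_bigr => h _ do rewrite galois_coords (fun_if (fun v => act h s * v)) mulr0.
rewrite -big_mkcondr /= (eq_bigl (@obj G)) => [|h]; last exact/andb_idl/wK.
rewrite -[RHS]mulr1 -sum_one_obj mulr_sumr; apply: eq_bigr => h oh.
by rewrite act_obj // -mulrA one_idem.
Qed.

Lemma trace_split K1 K2 s t :
  \sum_(i < m) trace K1 (s * a i) * trace K2 (b i * t) = trace (K1 :&: K2) (s * t).
Proof.
transitivity (\sum_(k in K1) \sum_(h in K2)
    act k s * act h t * \sum_(i < m) act k (a i) * act h (b i)).
  rewrite /trace; under eq_bigr => i _ do rewrite mulr_suml.
  rewrite exchange_big /=; apply: eq_bigr => k _.
  under eq_bigr => i _ do rewrite mulr_sumr.
  rewrite exchange_big /=; apply: eq_bigr => h _.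
  by rewrite mulr_sumr; apply: eq_bigr => i _; rewrite !actM; ring.
rewrite /trace [RHS](eq_bigl (fun k => (k \in K1) && (k \in K2))) => [|k]; last first.
  by rewrite inE.
rewrite big_mkcondr; apply: eq_bigr => k _.
under eq_bigr => h _ do rewrite galois_orth.
rewrite big_mkcond (bigD1 k) //= big1 ?addr0 => [|h hk]; last first.
  by case: ifP => //; rewrite eq_sym (negbTE hk) mulr0.
by case: ifP => // _; rewrite eqxx actM -mulrA act_mul_one.
Qed.

Section Subgroupoid.
Variable H : {set G}.
Hypotheses (sH : subgroupoid H) (wH : wide H).

Lemma GT_fixed_sub g : one g != 0 -> GT one alpha (fixed H) g -> g \in H.
Proof.
move=> g_neq0 gT; apply: contraNT g_neq0 => gNH; apply/eqP; rewrite -[one g]mul1r.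
apply: (act_independent (P := mem H) (kap := id)
  (d := fun h => \sum_(i < m) act g (a i) * act h (b i))).
  by move=> h hH; apply: contraNneq gNH => <-.
have act_g t : fixed H t -> act g t = t * one g := gT t.
move=> s; rewrite mul1r {1}(galois_expand s wH) act_sum.
under eq_bigr => i _ do rewrite actM (act_g _ (trace_fixed _ sH))
  [_ * one g]mulrC mulrA act_mul_one /trace mulr_sumr.
rewrite exchange_big /=; apply: eq_bigr => h hH.
by rewrite mulr_suml; apply: eq_bigr => i _; rewrite actM mulrA.
Qed.

Lemma fixed_agree_eq0 g h e :
  (forall h', h' \in H -> src h = tgt h' -> gmul h h' != g) -> e * one g = e ->
  (forall t, fixed H t -> act g t * e = act h t * e) -> e = 0.
Proof.
move=> g_notin_hH e_g agree; rewrite -e_g.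
apply: (act_independent (P := fun h' => (h' \in H) && (src h == tgt h'))
  (kap := gmul h)
  (d := fun h' => \sum_(i < m) act g (a i) * e * act (gmul h h') (b i) * one h)).
  by move=> h' /andP [h'H /eqP shh']; apply: g_notin_hH.
move=> s; rewrite {1}(galois_expand s wH) act_sum mulr_sumr.
under eq_bigr => i _ do rewrite actM mulrCA [e * _]mulrC (agree _ (trace_fixed _ sH))
  act_trace mulr_suml mulr_sumr.
rewrite exchange_big /=; apply: eq_bigr => h' _.
by rewrite mulr_suml; apply: eq_bigr => i _; rewrite actM; ring.
Qed.

Lemma fixed_alpha_strong : alpha_strong one alpha (fixed H).
Proof.
move=> y z g h _ _ sg tg sh th ghT e _ e_neq0 e_in.
apply: NNPP => agree_ty.
have agree t : fixed H t -> act g t * e = act h t * e.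
  move=> Ht; apply: NNPP => neq; apply: agree_ty.
  exists (t * one y); split; first by exists t.
  have act_y k : src k = y -> alpha k (t * one y * one (ginv k)) = act k t.
    by move=> sk; rewrite -[LHS]/(act k _) actM -sk act_one_src act_mul_one.
  by rewrite !act_y //; apply/eqP.
have sgh : src (ginv g) = tgt h by rewrite src_inv tg th.
have ghH : gmul (ginv g) h \notin H.
  apply/negP => ghH; apply: ghT => t Ht.
  have inv_y : one (ginv (gmul (ginv g) h)) * one y = one (ginv (gmul (ginv g) h)).
    by rewrite -sh -(src_mul sgh) one_inv_src.
  have y_gh : one y * one (gmul (ginv g) h) = one (gmul (ginv g) h).
    by rewrite mulrC -sg -(tgt_inv g) -(tgt_mul sgh) one_mul_tgt.
  rewrite -mulrA [one y * _]mulrC inv_y -[LHS]/(act _ t) (fixed_act Ht ghH).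
  by rewrite -mulrA y_gh.
apply: (negP e_neq0); apply/eqP.
case: e_in => e_in.
  apply: (fixed_agree_eq0 _ e_in agree) => h' h'H shh'.
  exact: gmul_neq_lcoset_sym sH sgh ghH h'H shh'.
apply: (fixed_agree_eq0 (h := g) _ e_in) => [h' h'H sgh' | t Ht]; last by rewrite agree.
exact: gmul_neq_lcoset ghH h'H sgh'.
Qed.

Definition trace_image s := exists c, trace H c = s.

Lemma trace_image_fixed s : trace_image s -> fixed H s.
Proof. by case=> c <-; apply: trace_fixed. Qed.

Lemma trace_image0 : trace_image 0.
Proof. by exists 0; apply: trace0. Qed.

Lemma trace_imageD s t : trace_image s -> trace_image t -> trace_image (s + t).
Proof. by case=> c <- [d <-]; exists (c + d); apply: traceD. Qed.

Lemma trace_imageN s : trace_image s -> trace_image (- s).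
Proof. by case=> c <-; exists (- c); apply: traceN. Qed.

Lemma trace_image_mull t s : fixed H t -> trace_image s -> trace_image (t * s).
Proof. by move=> Ht [c <-]; exists (t * c); apply: trace_fixed_mull. Qed.

Lemma trace_image_sum (I : Type) (r : seq I) (P : pred I) (F : I -> S) :
  (forall i, P i -> trace_image (F i)) -> trace_image (\sum_(i <- r | P i) F i).
Proof.
by move=> FI; apply: big_ind => //; [apply: trace_image0 | apply: trace_imageD].
Qed.

Lemma trace_image_prod_sub1 (I : Type) (r : seq I) (F : I -> S) :
  (forall i, trace_image (F i)) -> trace_image (\prod_(i <- r) (1 - F i) - 1).
Proof.
move=> FI; elim: r => [|j r IH]; first by rewrite big_nil subrr; apply: trace_image0.
rewrite big_cons (_ : _ * _ - 1 =
  (\prod_(i <- r) (1 - F i) - 1) - \prod_(i <- r) (1 - F i) * F j); last by ring.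
apply: trace_imageD => //; apply/trace_imageN/trace_image_mull => //.
apply: fixed_prod => i _; apply: fixedD; first exact: fixed1.
exact/fixedN/trace_image_fixed.
Qed.

(* The image of the trace is an ideal of the fixed ring, and [det] is a
   polynomial in the entries; so [det (1 - Y) = det 1] modulo that ideal. *)
Lemma trace_image_det n (Y : 'M[S]_n) :
  (forall i j, trace_image (Y i j)) -> trace_image (\det (1%:M - Y) - 1).
Proof.
move=> YI; have fixedY i j : fixed H ((1%:M - Y) i j).
  rewrite !mxE; apply: fixedD; last exact/fixedN/trace_image_fixed.
  by case: (_ == _); [apply: fixed1 | apply: fixed0].
rewrite /determinant (bigD1 (1%g : 'S_n)) //= odd_perm1 expr0 mul1r addrAC.
apply: trace_imageD.
  rewrite (eq_bigr (fun i => 1 - Y i i)) => [|i _]; last by rewrite perm1 !mxE eqxx.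
  exact: trace_image_prod_sub1.
apply: trace_image_sum => s s_neq1.
have [i si] : exists i, s i != i.
  apply/existsP; rewrite -negb_forall; apply: contra s_neq1 => /forallP s1.
  by apply/eqP/permP => i; rewrite perm1; apply/eqP.
rewrite (bigD1 i) //= !mxE eq_sym (negbTE si) sub0r mulrCA mulrC.
apply: trace_image_mull; last exact/trace_imageN.
by apply: fixedM; [apply/fixedX/fixedN/fixed1 | apply: fixed_prod].
Qed.

(* Cramer's rule: [det (1 - X)] kills the column of the [a i], fixed by [X]. *)
Lemma trace_onto : exists c, trace H c = 1.
Proof.
pose X : 'M[S]_m := \matrix_(i, j) trace H (b j * a i).
pose A : 'cV[S]_m := \col_i a i.
have XA : X *m A = A.
  apply/matrixP => i k; rewrite !mxE [RHS](galois_expand (a i) wH).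
  by apply: eq_bigr => j _; rewrite !mxE mulrC.
have det_a j : \det (1%:M - X) * a j = 0.
  have XA0 : (1%:M - X) *m A = 0 by rewrite mulmxBl mul1mx XA subrr.
  have := congr1 (mulmx (\adj (1%:M - X))) XA0.
  rewrite mulmxA mul_adj_mx mul_scalar_mx mulmx0 => /matrixP /(_ j 0).
  by rewrite !mxE.
have det0 : \det (1%:M - X) = 0.
  rewrite -[LHS]mulr1 [X in _ * X](galois_expand 1 wH) mulr_sumr big1 // => j _.
  by rewrite mulrA det_a mul0r.
have := @trace_image_det _ X (fun i j => ex_intro _ (b j * a i) (esym (mxE _ _ _ _))).
by rewrite det0 sub0r => /trace_imageN; rewrite opprK.
Qed.

Lemma fixed_separable : separable_over (fixed [set: G]) (fixed H).
Proof.
have [c trc1] := trace_onto.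
have trH s : fixed H (trace H s) := trace_fixed s sH.
have trR s : fixed [set: G] (trace [set: G] s) := trace_fixed s (subgroupoidT G).
have trG s : fixed H (trace [set: G] s) := fixed_sub (subsetT H) (trR s).
have expandH s : trace H s = \sum_(k < m) trace H (a k) * trace [set: G] (b k * s).
  rewrite -[in LHS](mul1r s) -[in LHS](setIT H) -trace_split.
  by apply: eq_bigr => k _; rewrite mul1r.
have expandH' s t :
    trace H (s * t) = \sum_(i < m) trace [set: G] (s * a i) * trace H (b i * t).
  by rewrite -[in LHS](setTI H) trace_split.
exists [seq (trace H (a i), trace H (b i * c)) | i <- index_enum 'I_m]; split.
  by move=> p /mapP [i _ ->]; split; apply: trH.
split.
  rewrite big_map -trc1 -[c in RHS]mul1r -[H in RHS](setIid H) -trace_split.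
  by apply: eq_bigr => i _; rewrite mul1r.
move=> t Ht M f fb; rewrite !big_map /=.
have f_suml := balanced_suml (@fixed0 H) (@fixedD H) fb.
have f_sumr := balanced_sumr (@fixed0 H) (@fixedD H) fb.
have [_ [_ f_mid]] := fb.
(* [t] crosses the tensor sign through coefficients [trace [set: G] _] in [R]. *)
transitivity (\sum_(i < m) \sum_(k < m)
    f (trace H (a k)) (trace [set: G] (b k * t * a i) * trace H (b i * c))).
  apply: eq_bigr => i _.
  rewrite -trace_fixed_mull // expandH f_suml => [|k|];
    [|exact: fixedM (trH _) (trG _) | exact: trH].
  by apply: eq_bigr => k _; rewrite (f_mid _ _ _ (trH _) (trH _) (trR _)) mulrA.
rewrite exchange_big /=; apply: eq_bigr => k _.
rewrite -f_sumr => [|i|]; [|exact: fixedM (trG _) (trH _) | exact: trH].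
rewrite -expandH' [in RHS]mulrC -trace_fixed_mull //; congr (f _ (trace H _)); ring.
Qed.

End Subgroupoid.
End GaloisCoordinates.
End PartialAction.

Unset Implicit Arguments.
Theorem proposition5p5 (G : groupoid) (S : comNzRingType)
  (one : G -> S) (alpha : G -> S -> S) (H : {set G}) :
  unital_partial_action one alpha ->
  gconnected G ->
  group_type_on one [set: G] ->
  (forall g : G, one g != 0) ->
  partial_galois one alpha ->
  wSub one H ->
  separable_over (fixed_ring one alpha [set: G]) (fixed_ring one alpha H) /\
  alpha_strong one alpha (fixed_ring one alpha H) /\
  (forall g : G, GT one alpha (fixed_ring one alpha H) g <-> g \in H).
Proof.
move=> upa _ _ one_neq0 [m [_ [a [b galois_coords]]]] [sH wH _].
split; first exact: (fixed_separable upa galois_coords sH wH).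
split; first exact: (fixed_alpha_strong upa galois_coords sH wH).
move=> g; split; first exact: (GT_fixed_sub upa galois_coords sH wH (one_neq0 g)).
by move=> gH t Ht; apply: Ht.
Qed.
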